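(* Let $M,M'$ be positive integers, $L_1\ge2$, $L_2\ge1$, and let $\Gamma_{1,1},\dots,\Gamma_{1,L_1},\Gamma_{2,1},\dots,\Gamma_{2,L_2}$ be pairwise co-prime positive integers with $\Gamma_{1,1}=\dot\Gamma_{1,1}M'$ for some integer $\dot\Gamma_{1,1}$. Consider the moduli $M_i=M\Gamma_{1,i}$ for $1\le i\le L_1$ and $M_{L_1+i}=MM'\Gamma_{2,i}$ for $1\le i\le L_2$. Let $N$ be an integer with $0\le N<\operatorname{lcm}(M_1,\dots,M_{L_1+L_2})$, let $r_i$ be the remainder of $N$ modulo $M_i$, $n_i=(N-r_i)/M_i$, and let $\tilde r_i$ be integers with $0\le\tilde r_i\le M_i-1$ and $|\tilde r_i-r_i|\le\tau_i$, where $$\tau_1<M/4,\qquad \tau_i\le M/4\ (2\le i\le L_1),\qquad \tau_i\le MM'/2-M/4\ (L_1+1\le i\le L_1+L_2).$$ Then the single-stage algorithm (described in the context) run on $M_1,\dots,M_{L_1+L_2}$ with reference index $1$ and inputs $\tilde r_i$ outputs $\hat n_i=n_i$ for all $1\le i\le L_1+L_2$.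
   Context: For $x\in\mathbb R$, $[x]$ denotes the unique integer with $-1/2\le x-[x]<1/2$. Single-stage algorithm: let $P_1,\dots,P_m$ ($m\ge2$) be pairwise distinct positive integers, $k\in\{1,\dots,m\}$ a reference index, and $x_1,\dots,x_m$ integers. For each $i\ne k$ put $m_{ki}=\gcd(P_k,P_i)$, $\Gamma_{ki}=P_k/m_{ki}$, $\Gamma_{ik}=P_i/m_{ki}$, $\hat q_{ik}=[(x_i-x_k)/m_{ki}]$; let $\bar\Gamma_{ki}$ be a multiplicative inverse of $\Gamma_{ki}$ modulo $\Gamma_{ik}$, and let $\hat\xi_{ik}\in\{0,\dots,\Gamma_{ik}-1\}$ with $\hat\xi_{ik}\equiv\hat q_{ik}\bar\Gamma_{ki}\pmod{\Gamma_{ik}}$. Let $\hat n_k$ be the least nonnegative integer $y$ with $y\equiv\hat\xi_{ik}\pmod{\Gamma_{ik}}$ for all $i\ne k$ (if no such $y$ exists the algorithm fails). For $i\ne k$ set $\hat n_i=(\hat n_k\Gamma_{ki}-\hat q_{ik})/\Gamma_{ik}$. Outputs: $\hat n_1,\dots,\hat n_m$ and the estimate $[\frac1m\sum_{i=1}^m(\hat n_iP_i+x_i)]$. *)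

From Stdlib Require Import ZArith Reals List.
Open Scope Z_scope.

(* [x] = the unique integer z with -1/2 <= x - z < 1/2,
   i.e. x - 1/2 < z <= x + 1/2, i.e. z = up (x - 1/2)
   (Stdlib: up y is the unique integer with y < up y <= y + 1). *)
Definition nround (x : R) : Z := up (x - / 2)%R.

Definition mgcd (P : nat -> Z) (a b : nat) : Z := Z.gcd (P a) (P b).
Definition Gam (P : nat -> Z) (a b : nat) : Z := P a / mgcd P a b.
Definition qhat (P x : nat -> Z) (i k : nat) : Z :=
  nround (IZR (x i - x k) / IZR (mgcd P k i))%R.
(* xihat_{ik} in {0,..,Gamma_ik - 1}, congruent to qhat_{ik} * Gbar_{ki} mod Gamma_ik;
   Gbar i stands for the chosen inverse Gbar_{ki}. *)
Definition xihat (P x Gbar : nat -> Z) (i k : nat) : Z :=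
  (qhat P x i k * Gbar i) mod Gam P i k.

Definition valid_inverses (m k : nat) (P Gbar : nat -> Z) : Prop :=
  forall i, (1 <= i <= m)%nat -> i <> k ->
    (Gam P i k | Gam P k i * Gbar i - 1).

(* nh is the output (nhat_1,...,nhat_m) of the single-stage algorithm
   (which in particular does not fail) for the given choice Gbar of inverses. *)
Definition single_stage_output (m k : nat) (P x Gbar nh : nat -> Z) : Prop :=
  (0 <= nh k
   /\ (forall i, (1 <= i <= m)%nat -> i <> k -> (Gam P i k | nh k - xihat P x Gbar i k))
   /\ (forall y, 0 <= y ->
         (forall i, (1 <= i <= m)%nat -> i <> k -> (Gam P i k | y - xihat P x Gbar i k)) ->
         nh k <= y))
  /\ (forall i, (1 <= i <= m)%nat -> i <> k ->
        nh i = (nh k * Gam P k i - qhat P x i k) / Gam P i k).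

Definition lcm_upto (P : nat -> Z) (m : nat) : Z :=
  fold_left Z.lcm (map P (seq 1 m)) 1.

Definition Gall (L1 : nat) (G1 G2 : nat -> Z) (j : nat) : Z :=
  if (j <=? L1)%nat then G1 j else G2 (j - L1)%nat.

Definition Mods (M M' : Z) (L1 : nat) (G1 G2 : nat -> Z) (j : nat) : Z :=
  if (j <=? L1)%nat then M * G1 j else M * M' * G2 (j - L1)%nat.

(** Writing [N = n_i P_i + r_i] and [P_i = Gamma_ik m_ki], the scaled residue
    difference [(x_i - x_k) / m_ki] equals the integer
    [n_k Gamma_ki - n_i Gamma_ik] up to an error of modulus below [1/2] as long
    as the two residue errors sum to less than [m_ki / 2]; so rounding returns it
    exactly.  Multiplying by the inverse of [Gamma_ki] then gives
    [n_k = xi_ik mod Gamma_ik] for every [i], and any smaller nonnegative solution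
    [y] would make [(n_k - y) P_k] a positive common multiple of all [P_i] not
    exceeding [N], contradicting [N < lcm].  In the setting of the corollary,
    [M] divides every [m_1i] and [M M'] divides [m_1i] for [i > L1], which is
    exactly what the bounds on the [tau_i] are designed for. *)

From Stdlib Require Import ZArith Reals List Lia Lra Znumtheory.
Open Scope Z_scope.

Lemma nround_div_add (g q a : Z) :
  0 < g -> (Rabs (IZR a) < IZR g / 2)%R -> nround (IZR (g * q + a) / IZR g) = q.
Proof.
  intros Hg Ha.
  assert (Hg' : (0 < IZR g)%R) by (apply IZR_lt; lia).
  apply Rabs_def2 in Ha.
  set (t := (IZR a / IZR g)%R).
  assert (Et : IZR a = (t * IZR g)%R) by (unfold t; field; lra).
  assert (E : (IZR (g * q + a) / IZR g = IZR q + t)%R)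
    by (unfold t; rewrite plus_IZR, mult_IZR; field; lra).
  unfold nround; rewrite E; symmetry; apply tech_up; nra.
Qed.

Lemma Z_sub_mod_div (N p : Z) : 0 < p -> (N - N mod p) / p = N / p.
Proof.
  intros Hp; rewrite Z.mod_eq by lia.
  replace (N - (N - p * (N / p))) with (N / p * p) by ring.
  apply Z.div_mul; lia.
Qed.

Lemma mgcd_comm (P : nat -> Z) (a b : nat) : mgcd P a b = mgcd P b a.
Proof. apply Z.gcd_comm. Qed.

Lemma mgcd_pos (P : nat -> Z) (a b : nat) : 0 < P a -> 0 < mgcd P a b.
Proof.
  intros Ha; pose proof (Z.gcd_nonneg (P a) (P b)) as Hnn.
  pose proof (Z.gcd_eq_0_l (P a) (P b)); unfold mgcd; lia.
Qed.

Lemma divide_mgcd_le (P : nat -> Z) (a b : nat) (d : Z) :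
  0 < P a -> (d | P a) -> (d | P b) -> d <= mgcd P a b.
Proof.
  intros Ha Hda Hdb; apply Z.divide_pos_le; [now apply mgcd_pos|].
  now apply Z.gcd_greatest.
Qed.

Lemma mgcd_mul_Gam (P : nat -> Z) (a b : nat) :
  0 < P a -> P a = mgcd P a b * Gam P a b.
Proof.
  intros Ha; apply Zdivide_Zdiv_eq; [now apply mgcd_pos | apply Z.gcd_divide_l].
Qed.

Lemma Gam_pos (P : nat -> Z) (a b : nat) : 0 < P a -> 0 < Gam P a b.
Proof.
  intros Ha; pose proof (mgcd_mul_Gam P a b Ha); pose proof (mgcd_pos P a b Ha).
  nia.
Qed.

Lemma fold_left_lcm_divide (l : list Z) (a X : Z) :
  (a | X) -> (forall z, In z l -> (z | X)) -> (fold_left Z.lcm l a | X).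
Proof.
  revert a; induction l as [|z l IH]; intros a Ha Hl; simpl; auto.
  apply IH; [apply Z.lcm_least; auto; apply Hl; simpl; auto|].
  intros w Hw; apply Hl; simpl; auto.
Qed.

Lemma lcm_upto_divide (P : nat -> Z) (m : nat) (X : Z) :
  (forall j, (1 <= j <= m)%nat -> (P j | X)) -> (lcm_upto P m | X).
Proof.
  intros H; apply fold_left_lcm_divide; [apply Z.divide_1_l|].
  intros z Hz; apply in_map_iff in Hz as [j [<- Hj]]; apply in_seq in Hj.
  apply H; lia.
Qed.

Section SingleStage.

Variables (m k : nat) (P x Gbar : nat -> Z) (N : Z).

Hypothesis P_pos : forall i, (1 <= i <= m)%nat -> 0 < P i.
Hypothesis k_range : (1 <= k <= m)%nat.
Hypothesis N_range : 0 <= N < lcm_upto P m.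
Hypothesis Gbar_inv : valid_inverses m k P Gbar.
Hypothesis residue_errors : forall i, (1 <= i <= m)%nat -> i <> k ->
  (Rabs (IZR (x i - N mod P i)) + Rabs (IZR (x k - N mod P k))
     < IZR (mgcd P k i) / 2)%R.

Lemma qhat_eq (i : nat) : (1 <= i <= m)%nat -> i <> k ->
  qhat P x i k = N / P k * Gam P k i - N / P i * Gam P i k.
Proof.
  intros Hi Hik; unfold qhat.
  pose proof (P_pos k k_range); pose proof (P_pos i Hi).
  pose proof (mgcd_mul_Gam P k i (P_pos k k_range)) as Ek.
  pose proof (mgcd_mul_Gam P i k (P_pos i Hi)) as Ei; rewrite mgcd_comm in Ei.
  set (ei := x i - N mod P i); set (ek := x k - N mod P k).
  assert (Ex : x i - x k
               = mgcd P k i * (N / P k * Gam P k i - N / P i * Gam P i k) + (ei - ek)).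
  { unfold ei, ek; rewrite !Z.mod_eq by lia; rewrite Ek at 2; rewrite Ei at 2; ring. }
  rewrite Ex; apply nround_div_add; [now apply mgcd_pos, P_pos|].
  eapply Rle_lt_trans; [|exact (residue_errors i Hi Hik)].
  rewrite minus_IZR.
  pose proof (Rabs_triang (IZR ei) (- IZR ek)) as T; rewrite Rabs_Ropp in T; exact T.
Qed.

Lemma xihat_congr (i : nat) : (1 <= i <= m)%nat -> i <> k ->
  (Gam P i k | N / P k - xihat P x Gbar i k).
Proof.
  intros Hi Hik.
  pose proof (Gam_pos P i k (P_pos i Hi)) as HG.
  destruct (Gbar_inv i Hi Hik) as [c Hc].
  unfold xihat; rewrite Z.mod_eq by lia; rewrite (qhat_eq i Hi Hik).
  set (q := (N / P k * Gam P k i - N / P i * Gam P i k) * Gbar i).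
  exists (N / P i * Gbar i - N / P k * c + q / Gam P i k).
  assert (N / P k * (Gam P k i * Gbar i - 1) = N / P k * (c * Gam P i k))
    by now rewrite Hc.
  unfold q; nia.
Qed.

Lemma Gam_divide_mul (i : nat) (D : Z) : (1 <= i <= m)%nat ->
  (Gam P i k | D) -> (P i | D * P k).
Proof.
  intros Hi [t Ht].
  pose proof (mgcd_mul_Gam P k i (P_pos k k_range)) as Ek.
  pose proof (mgcd_mul_Gam P i k (P_pos i Hi)) as Ei; rewrite mgcd_comm in Ei.
  exists (t * Gam P k i); rewrite Ht, Ek, Ei; ring.
Qed.

Lemma quotient_minimal (y : Z) : 0 <= y ->
  (forall i, (1 <= i <= m)%nat -> i <> k -> (Gam P i k | y - xihat P x Gbar i k)) ->
  N / P k <= y.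
Proof.
  intros Hy Hcongr.
  pose proof (P_pos k k_range) as Hk.
  destruct (Z_lt_le_dec y (N / P k)) as [Hlt|]; [exfalso|lia].
  set (D := N / P k - y).
  assert (Hmult : (lcm_upto P m | D * P k)).
  { apply lcm_upto_divide; intros j Hj.
    destruct (Nat.eq_dec j k) as [->|Hjk]; [now exists D|].
    apply Gam_divide_mul; [exact Hj|].
    replace D with ((N / P k - xihat P x Gbar j k) - (y - xihat P x Gbar j k))
      by (unfold D; ring).
    apply Z.divide_sub_r; [apply xihat_congr | apply Hcongr]; assumption. }
  apply Z.divide_pos_le in Hmult; [|unfold D; nia].
  pose proof (Z.mul_div_le N (P k) Hk).
  assert (D * P k <= N) by (unfold D; nia).
  lia.
Qed.

Theorem single_stage_recovers_quotients :
  single_stage_output m k P x Gbar (fun j => (N - N mod P j) / P j).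
Proof.
  pose proof (P_pos k k_range) as Hk.
  split; [split; [|split]|].
  - rewrite Z_sub_mod_div by lia; apply Z.div_pos; lia.
  - intros i Hi Hik; rewrite Z_sub_mod_div by lia; now apply xihat_congr.
  - intros y Hy Hcongr; rewrite Z_sub_mod_div by lia; now apply quotient_minimal.
  - intros i Hi Hik; rewrite !Z_sub_mod_div by auto.
    pose proof (Gam_pos P i k (P_pos i Hi)).
    rewrite (qhat_eq i Hi Hik).
    replace (N / P k * Gam P k i - (N / P k * Gam P k i - N / P i * Gam P i k))
      with (N / P i * Gam P i k) by ring.
    rewrite Z.div_mul; lia.
Qed.

End SingleStage.

Lemma Mods_pos (M M' : Z) (L1 L2 : nat) (G1 G2 : nat -> Z) (j : nat) :
  0 < M -> 0 < M' ->
  (forall i, (1 <= i <= L1)%nat -> 0 < G1 i) ->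
  (forall i, (1 <= i <= L2)%nat -> 0 < G2 i) ->
  (1 <= j <= L1 + L2)%nat -> 0 < Mods M M' L1 G1 G2 j.
Proof.
  intros HM HM' HG1 HG2 Hj; unfold Mods.
  destruct (Nat.leb_spec j L1).
  - specialize (HG1 j ltac:(lia)); nia.
  - specialize (HG2 (j - L1)%nat ltac:(lia)); nia.
Qed.

Lemma M_divide_Mods (M M' : Z) (L1 : nat) (G1 G2 : nat -> Z) (j : nat) :
  (M | Mods M M' L1 G1 G2 j).
Proof.
  unfold Mods; destruct (j <=? L1)%nat; [exists (G1 j) | exists (M' * G2 (j - L1)%nat)];
    ring.
Qed.

Lemma MM'_divide_Mods (M M' : Z) (L1 : nat) (G1 G2 : nat -> Z) (Gd11 : Z) (j : nat) :
  G1 1%nat = Gd11 * M' -> (j = 1 \/ L1 < j)%nat ->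
  (M * M' | Mods M M' L1 G1 G2 j).
Proof.
  intros HGd Hj; unfold Mods; destruct (Nat.leb_spec j L1).
  - replace j with 1%nat by lia; rewrite HGd; exists Gd11; ring.
  - exists (G2 (j - L1)%nat); ring.
Qed.

Theorem corollary4 (M M' : Z) (L1 L2 : nat) (G1 G2 : nat -> Z) (Gd11 N : Z)
  (rt : nat -> Z) (tau : nat -> R) :
  0 < M -> 0 < M' -> (2 <= L1)%nat -> (1 <= L2)%nat ->
  (forall i, (1 <= i <= L1)%nat -> 0 < G1 i) ->
  (forall i, (1 <= i <= L2)%nat -> 0 < G2 i) ->
  (forall i j, (1 <= i <= L1 + L2)%nat -> (1 <= j <= L1 + L2)%nat -> i <> j ->
     Z.gcd (Gall L1 G1 G2 i) (Gall L1 G1 G2 j) = 1) ->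
  G1 1%nat = Gd11 * M' ->
  0 <= N < lcm_upto (Mods M M' L1 G1 G2) (L1 + L2) ->
  (forall i, (1 <= i <= L1 + L2)%nat -> 0 <= rt i <= Mods M M' L1 G1 G2 i - 1) ->
  (forall i, (1 <= i <= L1 + L2)%nat ->
     (Rabs (IZR (rt i - N mod Mods M M' L1 G1 G2 i)) <= tau i)%R) ->
  (tau 1%nat < IZR M / 4)%R ->
  (forall i, (2 <= i <= L1)%nat -> (tau i <= IZR M / 4)%R) ->
  (forall i, (L1 + 1 <= i <= L1 + L2)%nat ->
     (tau i <= IZR M * IZR M' / 2 - IZR M / 4)%R) ->
  forall Gbar : nat -> Z,
    valid_inverses (L1 + L2) 1 (Mods M M' L1 G1 G2) Gbar ->
    single_stage_output (L1 + L2) 1 (Mods M M' L1 G1 G2) rt Gbar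
      (fun j => (N - N mod Mods M M' L1 G1 G2 j) / Mods M M' L1 G1 G2 j).
Proof.
  intros HM HM' HL1 _ HG1 HG2 _ HGd HN _ Herr Htau1 Htau2 Htau3 Gbar Hinv.
  set (P := Mods M M' L1 G1 G2) in *.
  assert (HP : forall i, (1 <= i <= L1 + L2)%nat -> 0 < P i)
    by (intros; now apply Mods_pos with L2).
  apply single_stage_recovers_quotients; [exact HP | lia | exact HN | exact Hinv |].
  intros i Hi Hi1.
  pose proof (Herr i Hi); pose proof (Herr 1%nat ltac:(lia)).
  assert (HP1 : 0 < P 1%nat) by (apply HP; lia).
  destruct (Nat.le_gt_cases i L1) as [Hle|Hgt].
  - assert (Hgcd : M <= mgcd P 1 i)
      by (apply divide_mgcd_le; [exact HP1 | apply M_divide_Mods ..]).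
    apply IZR_le in Hgcd; specialize (Htau2 i ltac:(lia)); lra.
  - assert (Hgcd : M * M' <= mgcd P 1 i)
      by (apply divide_mgcd_le; [exact HP1 | apply MM'_divide_Mods with Gd11; lia ..]).
    apply IZR_le in Hgcd; rewrite mult_IZR in Hgcd; specialize (Htau3 i ltac:(lia)); lra.
Qed.
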